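(* Let $k\ge1$, let $A_k$ be the matrix defined below and $\mathbf{b}=(\mathbf{w}_1,\mathbf{w}_2,c)^{\mathsf T}\in\mathbb{Z}^{2k+1}$ with $\mathbf{w}_1,\mathbf{w}_2\in\mathbb{Z}^k$, $c\in\mathbb{Z}$, and write $G=G_{A_k,\mathbf{b},\mathcal{G}(A_k)}$. If $l(\mathbf{b})=u(\mathbf{b})$, then $$\delta(G)=|\mathrm{supp}(\mathbf{w}_1+\|\mathbf{w}_1^-\|_\infty\mathbf{1}_k)|+|\mathrm{supp}(\mathbf{w}_2+\|\mathbf{w}_2^-\|_\infty\mathbf{1}_k)|.$$ If $l(\mathbf{b})<u(\mathbf{b})$, then $$\delta(G)=\min_{j\in\{1,2\}}|\mathrm{supp}(\mathbf{w}_j+\|\mathbf{w}_j^-\|_\infty\mathbf{1}_k)|+k+2^k.$$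
   Context: $I_k$ is the $k\times k$ identity, $\mathbf{1}_k$ the all-ones vector in $\mathbb{Z}^k$. Define $$A_k=\begin{pmatrix} I_k & I_k & 0 & 0 & -\mathbf{1}_k & \mathbf{0}\\ 0&0&I_k&I_k&\mathbf{0}&-\mathbf{1}_k\\ 0&0&0&0&1&1\end{pmatrix}\in\mathbb{Z}^{(2k+1)\times(4k+2)}$$ (zero blocks of appropriate sizes; last two columns are single columns). Fiber: $\mathcal{F}_A(\mathbf{b})=\{\mathbf{u}\in\mathbb{Z}^n_{\ge0}:A\mathbf{u}=\mathbf{b}\}$. For $\mathcal{M}\subset\mathbb{Z}^n$, $G_{A,\mathbf{b},\mathcal{M}}$ is the graph on $\mathcal{F}_A(\mathbf{b})$ with distinct $\mathbf{u},\mathbf{v}$ adjacent iff $\mathbf{u}-\mathbf{v}\in\pm\mathcal{M}$. The Graver basis $\mathcal{G}(A)$ is the set of $\sqsubseteq$-minimal elements of $(\ker A\cap\mathbb{Z}^n)\setminus\{\mathbf{0}\}$, where $\mathbf{u}\sqsubseteq\mathbf{v}$ iff $u_iv_i\ge0$ and $|u_i|\le|v_i|$ for all $i$. $\delta$ denotes minimal vertex degree; $\mathrm{supp}(\mathbf{w})$ is the set of indices of nonzero entries of $\mathbf{w}$. For $\mathbf{w}\in\mathbb{Z}^k$, $\mathbf{w}^-$ has entries $\max(-w_i,0)$. $l(\mathbf{b}):=\|\mathbf{w}_1^-\|_\infty$, $u(\mathbf{b}):=c-\|\mathbf{w}_2^-\|_\infty$. *)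

From mathcomp Require Import all_boot all_order all_algebra.
Set Implicit Arguments. Unset Strict Implicit. Unset Printing Implicit Defensive.
Import Order.TTheory GRing.Theory Num.Theory.
Local Open Scope ring_scope.

Notation ivec n := 'cV[int]_n.

(* Column layout (0-based): [0,k) first I_k, [k,2k) second I_k,
   [2k,3k) third I_k, [3k,4k) fourth I_k, 4k and 4k+1 the two single columns.
   Row layout: [0,k) first block row, [k,2k) second block row, 2k last row. *)
Definition A_mat (k : nat) : 'M[int]_(2 * k + 1, 4 * k + 2) :=
  \matrix_(i < 2 * k + 1, j < 4 * k + 2)
    (if (i < k)%N then
       (if (j == i :> nat) || (j == (i + k)%N :> nat) then 1
        else if j == (4 * k)%N :> nat then -1 else 0)
     else if (i < 2 * k)%N then
       (if (j == (i + k)%N :> nat) || (j == (i + 2 * k)%N :> nat) then 1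
        else if j == (4 * k)%N.+1 :> nat then -1 else 0)
     else
       (if (j == (4 * k)%N :> nat) || (j == (4 * k)%N.+1 :> nat) then 1 else 0)).

Definition vat (k : nat) (w : ivec k) (i : nat) : int :=
  if @insub nat (fun m => (m < k)%N) 'I_k i is Some j then w j 0 else 0.

Definition b_vec (k : nat) (w1 w2 : ivec k) (c : int) : ivec (2 * k + 1) :=
  \col_(i < 2 * k + 1)
    (if (i < k)%N then vat w1 i
     else if (i < 2 * k)%N then vat w2 (i - k)%N
     else c).

Definition in_fiber (m n : nat) (A : 'M[int]_(m, n)) (b : ivec m) (u : ivec n) : Prop :=
  (forall i, 0 <= u i 0) /\ A *m u = b.

Definition conf_le (n : nat) (u v : ivec n) : Prop :=
  forall i, 0 <= u i 0 * v i 0 /\ `|u i 0| <= `|v i 0|.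

Definition graver (m n : nat) (A : 'M[int]_(m, n)) (g : ivec n) : Prop :=
  A *m g = 0 /\ g != 0 /\
  (forall h : ivec n, A *m h = 0 -> h != 0 -> conf_le h g -> h = g).

Definition adjacent (m n : nat) (A : 'M[int]_(m, n)) (b : ivec m)
    (M : ivec n -> Prop) (u v : ivec n) : Prop :=
  in_fiber A b u /\ in_fiber A b v /\ u <> v /\ (M (u - v) \/ M (- (u - v))).

Definition has_degree (m n : nat) (A : 'M[int]_(m, n)) (b : ivec m)
    (M : ivec n -> Prop) (u : ivec n) (d : nat) : Prop :=
  exists s : seq (ivec n),
    uniq s /\ size s = d /\ (forall v, v \in s <-> adjacent A b M u v).

Definition min_degree (m n : nat) (A : 'M[int]_(m, n)) (b : ivec m)
    (M : ivec n -> Prop) (d : nat) : Prop :=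
  (exists u, in_fiber A b u /\ has_degree A b M u d) /\
  (forall u d', in_fiber A b u -> has_degree A b M u d' -> (d <= d')%N).

Definition negnorm (k : nat) (w : ivec k) : int :=
  \big[Num.max/0]_(i < k) Num.max (- w i 0) 0.

Definition supp_shift (k : nat) (w : ivec k) : nat :=
  #|[set i : 'I_k | w i 0 + negnorm w != 0]|.

Definition l_b (k : nat) (w1 w2 : ivec k) (c : int) : int := negnorm w1.
Definition u_b (k : nat) (w1 w2 : ivec k) (c : int) : int := c - negnorm w2.

From mathcomp Require Import all_boot all_order all_algebra zify.
Set Implicit Arguments. Unset Strict Implicit. Unset Printing Implicit Defensive.
Import Order.TTheory GRing.Theory Num.Theory.
Local Open Scope ring_scope.

(* The Graver basis of A_k consists of the vectors +-e1 i and +-e2 i, which move a unit between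
   the two identity blocks of one block row, and of the 2 * 4^k vectors +-bridge s t, which move a
   unit between the last two coordinates s and r and rebalance every row.  On the fiber, s ranges
   over [l(b), u(b)], and a vertex with s = S has at least
     |supp(w1 + S)| + |supp(w2 + c - S)| + 2^k [S < u(b)] + 2^k [l(b) < S]
   neighbours, with equality at the vertex whose second and fourth blocks vanish.  Both supports
   are full (of size k) for S > l(b), resp. S < u(b), so the minimum is attained at an endpoint. *)

Definition conf_int (a b : int) := 0 <= a * b /\ `|a| <= `|b|.

Lemma conf_intP a b : conf_int a b <-> (0 <= a <= b) \/ (b <= a <= 0).
Proof. rewrite /conf_int; nia. Qed.

Section Coordinates.
Variable n : nat.
Implicit Types g h : ivec n.

Lemma vat_ord g (i : 'I_n) : vat g i = g i 0.
Proof. by rewrite /vat valK. Qed.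

Lemma vat_out g j : (n <= j)%N -> vat g j = 0.
Proof. by move=> h; rewrite /vat insubF // ltnNge h. Qed.

Lemma vat_col (f : nat -> int) j :
  vat (\col_(i < n) f i) j = if (j < n)%N then f j else 0.
Proof.
case: (ltnP j n) => h; last by rewrite vat_out.
by rewrite (vat_ord _ (Ordinal h)) mxE.
Qed.

Lemma vatD g h j : vat (g + h) j = vat g j + vat h j.
Proof.
case: (ltnP j n) => hj; last by rewrite !vat_out.
by rewrite !(vat_ord _ (Ordinal hj)) mxE.
Qed.

Lemma vatN g j : vat (- g) j = - vat g j.
Proof.
case: (ltnP j n) => hj; last by rewrite !vat_out ?oppr0.
by rewrite !(vat_ord _ (Ordinal hj)) mxE.
Qed.

Lemma vatZ a g j : vat (a *: g) j = a * vat g j.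
Proof.
case: (ltnP j n) => hj; last by rewrite !vat_out ?mulr0.
by rewrite !(vat_ord _ (Ordinal hj)) mxE.
Qed.

Lemma vat0 j : vat (0 : ivec n) j = 0.
Proof. by rewrite -(scale0r 0) vatZ mul0r. Qed.

Lemma vat_inj g h : (forall j, (j < n)%N -> vat g j = vat h j) -> g = h.
Proof.
move=> E; apply/matrixP => i j; rewrite (ord1 j).
by have := E i (ltn_ord i); rewrite !vat_ord.
Qed.

Lemma vat_ge0 g : (forall i, 0 <= g i 0) -> forall j, 0 <= vat g j.
Proof.
move=> g0 j; case: (ltnP j n) => hj; last by rewrite vat_out.
by rewrite (vat_ord _ (Ordinal hj)).
Qed.

Lemma conf_le_vat h g : conf_le h g <-> forall j, conf_int (vat h j) (vat g j).
Proof.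
split=> [hg j|hg i]; last by have := hg i; rewrite !vat_ord.
case: (ltnP j n) => hj; last by rewrite !vat_out // /conf_int mulr0.
by rewrite !(vat_ord _ (Ordinal hj)); apply: hg.
Qed.

Lemma sum_eq_vat g a : \sum_(j < n) (((j : nat) == a)%:R * g j 0) = vat g a.
Proof.
case: (ltnP a n) => ha.
  rewrite (bigD1 (Ordinal ha)) //= eqxx mul1r big1 ?addr0 -?(vat_ord g (Ordinal ha)) //.
  by move=> j /eqP nj; case: eqP => [e|_]; [case: nj; apply: val_inj | rewrite mul0r].
rewrite vat_out // big1 // => j _; case: eqP => [e|_]; last by rewrite mul0r.
by move: ha; rewrite -e leqNgt ltn_ord.
Qed.

End Coordinates.

Section NegativePart.
Variable n : nat.
Implicit Type w : ivec n.

Lemma negnorm_ge0 w : 0 <= negnorm w.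
Proof. exact: bigmax_ge_id. Qed.

Lemma negnorm_ge w i : (i < n)%N -> - vat w i <= negnorm w.
Proof.
move=> ni; rewrite (vat_ord _ (Ordinal ni)).
by apply: le_trans (le_bigmax _ _ (Ordinal ni)); rewrite le_max lexx.
Qed.

Lemma negnorm_le w M : 0 <= M -> (forall i, (i < n)%N -> - vat w i <= M) ->
  negnorm w <= M.
Proof.
move=> M0 wM; apply/bigmax_leP; split=> // i _.
by rewrite ge_max M0 andbT -vat_ord wM.
Qed.

Lemma negnorm_lt w M : 0 < M -> (forall i, (i < n)%N -> - vat w i < M) ->
  negnorm w < M.
Proof.
move=> M0 wM; suff : negnorm w <= M - 1 by lia.
by apply: negnorm_le => [|i ni]; [lia | have := wM i ni; lia].
Qed.

Lemma card_supp_shift w S : negnorm w <= S ->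
  #|[set i : 'I_n | w i 0 + S != 0]| = if S == negnorm w then supp_shift w else n.
Proof.
case: eqP => [-> //|/eqP Sw wS]; rewrite -[RHS]card_ord -cardsT; apply: eq_card => i.
by rewrite !inE; have := negnorm_ge w (ltn_ord i); rewrite vat_ord; lia.
Qed.

Lemma supp_shift_le w : (supp_shift w <= n)%N.
Proof. by rewrite -{2}[n]card_ord max_card. Qed.

End NegativePart.

Lemma uniq_inl_inr (T1 T2 : eqType) (s1 : seq T1) (s2 : seq T2) :
  uniq s1 -> uniq s2 -> uniq ([seq inl x | x <- s1] ++ [seq inr x | x <- s2] : seq (T1 + T2)).
Proof.
move=> u1 u2; rewrite cat_uniq !map_inj_uniq; try by move=> ? ? [].
by rewrite u1 u2 andbT; apply/hasPn => _ /mapP[y _ ->]; apply/mapP => -[z _ //].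
Qed.

Section GraverGeneral.
Variables (m n : nat) (A : 'M[int]_(m, n)).

Lemma graver_opp g : graver A g -> graver A (- g).
Proof.
move=> [Ag [g0 gmin]]; split; first by rewrite mulmxN Ag oppr0.
split; first by rewrite oppr_eq0.
move=> h Ah h0 /conf_le_vat hg; apply: oppr_inj; rewrite opprK; apply: gmin.
- by rewrite mulmxN Ah oppr0.
- by rewrite oppr_eq0.
- by apply/conf_le_vat => j; move: (hg j); rewrite !vatN !conf_intP; lia.
Qed.

Lemma graver_of_multiples j g : A *m g = 0 -> vat g j = 1 ->
  (forall h, A *m h = 0 -> conf_le h g -> h = vat h j *: g) -> graver A g.
Proof.
move=> Ag gj gmult; split=> //; split.
  by apply/eqP => g0; move: gj; rewrite g0 vat0.
move=> h Ah h0 hg; have hE := gmult h Ah hg.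
have /conf_intP := (conf_le_vat h g).1 hg j; rewrite gj => hj.
have [hj0|hj1] : vat h j = 0 \/ vat h j = 1 by lia.
  by move: h0; rewrite hE hj0 scale0r eqxx.
by rewrite hE hj1 scale1r.
Qed.

End GraverGeneral.

Lemma indicator2E (j a b : nat) : a != b ->
  (if (j == a) || (j == b) then 1 else 0 : int) = (j == a)%:R + (j == b)%:R.
Proof.
move=> /negPf ab; case: (eqVneq j a) => [->|_]; first by rewrite ab addr0.
by case: (j == b); rewrite add0r.
Qed.

Lemma indicator3E (j a b c : nat) : a != b -> a != c -> b != c ->
  (if (j == a) || (j == b) then 1 else if j == c then -1 else 0 : int)
  = (j == a)%:R + (j == b)%:R - (j == c)%:R.
Proof.
move=> /negPf ab /negPf ac /negPf bc.
case: (eqVneq j a) => [->|_]; first by rewrite ab ac addr0 subr0.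
case: (eqVneq j b) => [->|_]; first by rewrite bc add0r subr0.
by case: (j == c); rewrite add0r ?sub0r ?subr0.
Qed.

Section Ak.
Variable k : nat.
Local Notation N := (4 * k + 2)%N.
Local Notation A := (A_mat k).
Implicit Types g h u v : ivec N.

(* The coordinates (x, y, z, t, s, r) of Z^(4k+2), following the column blocks of A_k. *)
Local Notation px g i := (vat g i).
Local Notation py g i := (vat g (k + i)%N).
Local Notation pz g i := (vat g (2 * k + i)%N).
Local Notation pt g i := (vat g (3 * k + i)%N).
Local Notation ps g := (vat g (4 * k)%N).
Local Notation pr g := (vat g (4 * k).+1).

Lemma A_mat_mulE g (i : 'I_(2 * k + 1)) : (A *m g) i 0 =
  if (i < k)%N then vat g i + vat g (i + k) - ps g
  else if (i < 2 * k)%N then vat g (i + k) + vat g (i + 2 * k) - pr g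
  else ps g + pr g.
Proof.
have sum3 a b c : \sum_(j < N) ((j == a :> nat)%:R + (j == b :> nat)%:R
    - (j == c :> nat)%:R) * g j 0 = vat g a + vat g b - vat g c.
  by under eq_bigr do rewrite mulrBl mulrDl; rewrite sumrB big_split /= !sum_eq_vat.
rewrite mxE; case: ifP => ik.
  have [ab ac bc] : [/\ i != (i + k)%N :> nat, i != (4 * k)%N :> nat
                    & (i + k)%N != (4 * k)%N :> nat] by split; apply/eqP; lia.
  by under eq_bigr => j _ do rewrite mxE ik indicator3E //; rewrite sum3.
case: ifP => i2k.
  have [ab ac bc] : [/\ (i + k)%N != (i + 2 * k)%N :> nat, (i + k)%N != (4 * k).+1 :> nat
                    & (i + 2 * k)%N != (4 * k).+1 :> nat] by split; apply/eqP; lia.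
  by under eq_bigr => j _ do rewrite mxE ik i2k indicator3E //; rewrite sum3.
have ab : (4 * k)%N != (4 * k).+1 :> nat by apply/eqP; lia.
under eq_bigr => j _ do rewrite mxE ik i2k indicator2E // mulrDl.
by rewrite big_split /= !sum_eq_vat.
Qed.

Lemma block_coord_ind (P : nat -> Prop) :
  (forall i, (i < k)%N -> P i) -> (forall i, (i < k)%N -> P (k + i)%N) ->
  (forall i, (i < k)%N -> P (2 * k + i)%N) -> (forall i, (i < k)%N -> P (3 * k + i)%N) ->
  P (4 * k)%N -> P (4 * k).+1 -> forall j, (j < N)%N -> P j.
Proof.
move=> Px Py Pz Pt Ps Pr j jN.
case: (ltnP j k) => j1; first exact: Px.
case: (ltnP j (2 * k)) => j2; first by rewrite -(subnKC j1); apply: Py; lia.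
case: (ltnP j (3 * k)) => j3; first by rewrite -(subnKC j2); apply: Pz; lia.
case: (ltnP j (4 * k)) => j4; first by rewrite -(subnKC j3); apply: Pt; lia.
by have [->|->] : j = (4 * k)%N \/ j = (4 * k).+1 by lia.
Qed.

Lemma eq_blocks g h :
  (forall i, (i < k)%N -> px g i = px h i) -> (forall i, (i < k)%N -> py g i = py h i) ->
  (forall i, (i < k)%N -> pz g i = pz h i) -> (forall i, (i < k)%N -> pt g i = pt h i) ->
  ps g = ps h -> pr g = pr h -> g = h.
Proof. by move=> *; apply: vat_inj; apply: block_coord_ind. Qed.

Lemma blocks_ge0 u :
  (forall i, (i < k)%N -> 0 <= px u i) -> (forall i, (i < k)%N -> 0 <= py u i) ->
  (forall i, (i < k)%N -> 0 <= pz u i) -> (forall i, (i < k)%N -> 0 <= pt u i) ->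
  0 <= ps u -> 0 <= pr u -> forall i, 0 <= u i 0.
Proof.
move=> *; rewrite -vat_ord.
by apply: (@block_coord_ind (fun j => 0 <= vat u j)).
Qed.

Lemma conf_le_blocks h g :
  (forall i, (i < k)%N -> conf_int (px h i) (px g i)) ->
  (forall i, (i < k)%N -> conf_int (py h i) (py g i)) ->
  (forall i, (i < k)%N -> conf_int (pz h i) (pz g i)) ->
  (forall i, (i < k)%N -> conf_int (pt h i) (pt g i)) ->
  conf_int (ps h) (ps g) -> conf_int (pr h) (pr g) -> conf_le h g.
Proof.
move=> *; apply/conf_le_vat => j; case: (ltnP j N) => jN.
  by apply: (@block_coord_ind (fun j => conf_int (vat h j) (vat g j))).
by rewrite !vat_out // /conf_int mulr0.
Qed.

Lemma mul_A_b g (w1 w2 : ivec k) (c : int) :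
  A *m g = b_vec w1 w2 c <->
  [/\ forall i, (i < k)%N -> px g i + py g i - ps g = vat w1 i,
      forall i, (i < k)%N -> pz g i + pt g i - pr g = vat w2 i
    & ps g + pr g = c].
Proof.
split=> [Ag|[E1 E2 E3]].
  have row i (hi : (i < 2 * k + 1)%N) :=
    congr1 (fun M : 'M[int]_(2 * k + 1, 1) => M (Ordinal hi) 0) Ag.
  split=> [i ik|i ik|].
  - by have := row i ltac:(lia); rewrite A_mat_mulE !mxE /= ik (addnC i k).
  - have := row (k + i)%N ltac:(lia); rewrite A_mat_mulE !mxE /=.
    have -> : (k + i < k)%N = false by lia.
    have -> : (k + i < 2 * k)%N = true by lia.
    have -> : (k + i + k = 2 * k + i)%N by lia.
    have -> : (k + i + 2 * k = 3 * k + i)%N by lia.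
    by rewrite addKn.
  - have := row (2 * k)%N ltac:(lia); rewrite A_mat_mulE !mxE /=.
    have -> : (2 * k < k)%N = false by lia.
    by rewrite ltnn.
apply/matrixP => i j; rewrite (ord1 j) A_mat_mulE mxE.
case: ifP => i1; first by rewrite -E1 // (addnC i k).
case: ifP => i2 //; rewrite -E2; last lia.
have -> : (i + k = 2 * k + (i - k))%N by lia.
by have -> : (i + 2 * k = 3 * k + (i - k))%N by lia.
Qed.

Lemma mul_A0 g :
  A *m g = 0 <->
  [/\ forall i, (i < k)%N -> px g i + py g i = ps g,
      forall i, (i < k)%N -> pz g i + pt g i = pr g
    & ps g + pr g = 0].
Proof.
have -> : 0 = b_vec (0 : ivec k) 0 0.
  by apply/matrixP => i j; rewrite !mxE !vat0; case: ifP => //; case: ifP.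
rewrite mul_A_b; split=> [] [E1 E2 E3]; split=> // i ik.
- by apply/eqP; rewrite -subr_eq0 E1 // vat0.
- by apply/eqP; rewrite -subr_eq0 E2 // vat0.
- by rewrite E1 // subrr vat0.
- by rewrite E2 // subrr vat0.
Qed.

Definition block_entry (fx fy fz ft : nat -> int) (a b : int) (j : nat) : int :=
  if (j < k)%N then fx j else if (j < 2 * k)%N then fy (j - k)%N
  else if (j < 3 * k)%N then fz (j - 2 * k)%N
  else if (j < 4 * k)%N then ft (j - 3 * k)%N
  else if j == (4 * k)%N then a else b.

Definition blocks fx fy fz ft a b : ivec N :=
  \col_(j < N) block_entry fx fy fz ft a b j.

Section BlocksProjections.
Variables (fx fy fz ft : nat -> int) (a b : int).
Local Notation B := (blocks fx fy fz ft a b).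

Local Ltac solve_blocks :=
  rewrite vat_col /block_entry; repeat (case: ifP => ?; try (exfalso; lia)); rewrite ?addKn.

Lemma px_blocks i : (i < k)%N -> px B i = fx i.
Proof. by move=> ?; solve_blocks. Qed.
Lemma py_blocks i : (i < k)%N -> py B i = fy i.
Proof. by move=> ?; solve_blocks. Qed.
Lemma pz_blocks i : (i < k)%N -> pz B i = fz i.
Proof. by move=> ?; solve_blocks. Qed.
Lemma pt_blocks i : (i < k)%N -> pt B i = ft i.
Proof. by move=> ?; solve_blocks. Qed.
Lemma ps_blocks : ps B = a.
Proof. by solve_blocks. Qed.
Lemma pr_blocks : pr B = b.
Proof. by solve_blocks. Qed.

End BlocksProjections.

(** * The Graver basis of A_k *)

Definition kdelta (i j : nat) : int := (j == i)%:R.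

Definition e1 i : ivec N :=
  blocks (kdelta i) (fun j => - kdelta i j) (fun _ => 0) (fun _ => 0) 0 0.
Definition e2 i : ivec N :=
  blocks (fun _ => 0) (fun _ => 0) (kdelta i) (fun j => - kdelta i j) 0 0.
Definition bridge (s t : nat -> bool) : ivec N :=
  blocks (fun j => (s j)%:R) (fun j => (~~ s j)%:R)
         (fun j => - (t j)%:R) (fun j => - (~~ t j)%:R) 1 (-1).

Local Notation blocksE :=
  (ps_blocks, pr_blocks, pt_blocks, pz_blocks, py_blocks, px_blocks).

Lemma graver_e1 i : (i < k)%N -> graver A (e1 i).
Proof.
move=> ik; apply: (graver_of_multiples (j := i)).
- by apply/mul_A0; split=> [j jk|j jk|]; rewrite ?blocksE // ?subrr ?addr0.
- by rewrite px_blocks // /kdelta eqxx.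
move=> h /mul_A0 [Hx Hz Hs] /conf_le_vat Cf.
have Ci j := (conf_intP _ _).1 (Cf j).
have := Ci (4 * k)%N; have := Ci (4 * k).+1; rewrite !blocksE => hr hs.
apply: eq_blocks => [j jk|j jk|j jk|j jk||]; rewrite !vatZ ?blocksE ?mulr0 //; try lia;
  move: (Ci j) (Ci (k + j)%N) (Ci (2 * k + j)%N) (Ci (3 * k + j)%N) (Hx j jk) (Hz j jk)
        (Ci i) (Ci (k + i)%N) (Hx i ik);
  rewrite ?blocksE // /kdelta; case: eqVneq => [->|] /=; lia.
Qed.

Lemma graver_e2 i : (i < k)%N -> graver A (e2 i).
Proof.
move=> ik; apply: (graver_of_multiples (j := 2 * k + i)).
- by apply/mul_A0; split=> [j jk|j jk|]; rewrite ?blocksE // ?subrr ?addr0.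
- by rewrite pz_blocks // /kdelta eqxx.
move=> h /mul_A0 [Hx Hz Hs] /conf_le_vat Cf.
have Ci j := (conf_intP _ _).1 (Cf j).
have := Ci (4 * k)%N; have := Ci (4 * k).+1; rewrite !blocksE => hr hs.
apply: eq_blocks => [j jk|j jk|j jk|j jk||]; rewrite !vatZ ?blocksE ?mulr0 //; try lia;
  move: (Ci j) (Ci (k + j)%N) (Ci (2 * k + j)%N) (Ci (3 * k + j)%N) (Hx j jk) (Hz j jk)
        (Ci (2 * k + i)%N) (Ci (3 * k + i)%N) (Hz i ik);
  rewrite ?blocksE // /kdelta; case: eqVneq => [->|] /=; lia.
Qed.

Lemma graver_bridge s t : graver A (bridge s t).
Proof.
apply: (graver_of_multiples (j := 4 * k)).
- by apply/mul_A0; split=> [j jk|j jk|]; rewrite ?blocksE //; case: (s j); case: (t j).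
- by rewrite ps_blocks.
move=> h /mul_A0 [Hx Hz Hs] /conf_le_vat Cf.
have Ci j := (conf_intP _ _).1 (Cf j).
have := Ci (4 * k)%N; have := Ci (4 * k).+1; rewrite !blocksE => hr hs.
apply: eq_blocks => [j jk|j jk|j jk|j jk||]; rewrite !vatZ ?blocksE; try lia;
  move: (Ci j) (Ci (k + j)%N) (Ci (2 * k + j)%N) (Ci (3 * k + j)%N) (Hx j jk) (Hz j jk);
  rewrite ?blocksE //; case: (s j); case: (t j) => /=; lia.
Qed.

Lemma graver_conf_le_eq g h : graver A g -> graver A h -> conf_le h g -> g = h.
Proof. by move=> [_ [_ gmin]] [Ah [h0 _]] hg; rewrite (gmin h). Qed.

Lemma graver_ps_gt0 g : graver A g -> 0 < ps g ->
  g = bridge (fun j => 0 < px g j) (fun j => pz g j < 0).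
Proof.
move=> G sg; apply: graver_conf_le_eq (graver_bridge _ _) _ => //.
have [Hx Hz Hs] := (mul_A0 g).1 G.1.
apply: conf_le_blocks => [i ik|i ik|i ik|i ik||]; rewrite ?blocksE //; apply/conf_intP;
  try (move: (Hx i ik) (Hz i ik);
       case: (boolP (0 < px g i)) => ?; case: (boolP (pz g i < 0)) => ?) => /=; lia.
Qed.

Lemma graver_e1_of g i : graver A g -> ps g = 0 -> (i < k)%N -> 0 < px g i -> g = e1 i.
Proof.
move=> G s0 ik xi; apply: graver_conf_le_eq (graver_e1 ik) _ => //.
have [Hx Hz Hs] := (mul_A0 g).1 G.1.
apply: conf_le_blocks => [j jk|j jk|j jk|j jk||]; rewrite ?blocksE //; apply/conf_intP;
  try (move: (Hx j jk) (Hx i ik); rewrite /kdelta; case: eqVneq => [->|]) => /=; lia.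
Qed.

Lemma graver_e2_of g i : graver A g -> ps g = 0 -> (i < k)%N -> 0 < pz g i -> g = e2 i.
Proof.
move=> G s0 ik zi; apply: graver_conf_le_eq (graver_e2 ik) _ => //.
have [Hx Hz Hs] := (mul_A0 g).1 G.1.
apply: conf_le_blocks => [j jk|j jk|j jk|j jk||]; rewrite ?blocksE //; apply/conf_intP;
  try (move: (Hz j jk) (Hz i ik); rewrite /kdelta; case: eqVneq => [->|]) => /=; lia.
Qed.

Lemma graver_cases g : graver A g ->
  [\/ exists2 i, (i < k)%N & g = e1 i \/ g = - e1 i,
      exists2 i, (i < k)%N & g = e2 i \/ g = - e2 i
    | exists s t, g = bridge s t \/ g = - bridge s t].
Proof.
move=> G; have Go := graver_opp G.
have [Hx Hz Hs] := (mul_A0 g).1 G.1.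
case: (ltrgtP (ps g) 0) => sg.
- have gE := graver_ps_gt0 Go; rewrite vatN oppr_gt0 in gE.
  by apply: Or33; do 2 eexists; right; apply: oppr_inj; rewrite opprK; apply: gE.
- by apply: Or33; do 2 eexists; left; apply: graver_ps_gt0.
have Go0 : ps (- g) = 0 by rewrite vatN sg oppr0.
case: (boolP [exists i : 'I_k, (px g i != 0) || (pz g i != 0)]).
  case/existsP => i /orP[xi|zi].
    apply: Or31; exists i; first exact: ltn_ord.
    case: (ltrgtP (px g i) 0) => [xi0|xi0|xi0].
    - by right; rewrite -(graver_e1_of Go Go0 (ltn_ord i)) ?opprK // vatN oppr_gt0.
    - by left; apply: graver_e1_of.
    - by rewrite xi0 eqxx in xi.
  apply: Or32; exists i; first exact: ltn_ord.
  case: (ltrgtP (pz g i) 0) => [zi0|zi0|zi0].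
  - by right; rewrite -(graver_e2_of Go Go0 (ltn_ord i)) ?opprK // vatN oppr_gt0.
  - by left; apply: graver_e2_of.
  - by rewrite zi0 eqxx in zi.
move/existsPn => xz0; have [_ [g0 _]] := G; case/eqP: g0.
have xz i : (i < k)%N -> px g i = 0 /\ pz g i = 0.
  by move=> ik; have := xz0 (Ordinal ik); rewrite negb_or !negbK => /andP[/eqP-> /eqP->].
apply: eq_blocks => [i ik|i ik|i ik|i ik||]; rewrite vat0;
  try (move: (xz i ik) (Hx i ik) (Hz i ik)); lia.
Qed.

(** * Degrees in the fiber graph *)

Section Fiber.
Variables (w1 w2 : ivec k) (c : int).
Local Notation b := (b_vec w1 w2 c).
Local Notation n1 := (negnorm w1).
Local Notation n2 := (negnorm w2).

Lemma in_fiberE u : in_fiber A b u ->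
  [/\ forall j, 0 <= vat u j,
      forall i, (i < k)%N -> px u i + py u i - ps u = vat w1 i,
      forall i, (i < k)%N -> pz u i + pt u i - pr u = vat w2 i
    & ps u + pr u = c].
Proof. by case=> /vat_ge0 u0 /mul_A_b[]. Qed.

Lemma fiber_range u : in_fiber A b u -> n1 <= ps u /\ n2 <= pr u.
Proof.
case/in_fiberE => u0 E1 E2 _; split; apply: negnorm_le => // i ik.
  by have := E1 i ik; have := u0 i; have := u0 (k + i)%N; lia.
by have := E2 i ik; have := u0 (2 * k + i)%N; have := u0 (3 * k + i)%N; lia.
Qed.

Lemma adjacentE u v : in_fiber A b u ->
  adjacent A b (graver A) u v <->
  exists2 g, graver A g & v = u + g /\ forall i, 0 <= v i 0.
Proof.
move=> Fu; split=> [[_ [[v0 _] [uv [G|G]]]]|[g G [-> v0]]].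
- by exists (- (u - v)); [apply: graver_opp | rewrite opprB addrC subrK].
- by exists (- (u - v)); last rewrite opprB addrC subrK.
have [Ag [g0 _]] := G; split=> //; split; first by split=> //; rewrite mulmxDr Ag addr0; case: Fu.
split; last by right; rewrite opprB addrC addKr.
by move=> ug; move: g0; rewrite -(addKr u g) -ug addNr eqxx.
Qed.

Definition fbits (f : {ffun 'I_k -> bool}) (j : nat) : bool :=
  if insub j : option 'I_k is Some o then f o else false.

Lemma fbits_ord f (i : 'I_k) : fbits f i = f i.
Proof. by rewrite /fbits valK. Qed.

Definition move_kind := (('I_k + 'I_k) + ({ffun 'I_k -> bool} + {ffun 'I_k -> bool}))%type.

(* An e-move leaves the positive coordinate of its pair; a bridge move lowers exactly the positive
   z (resp. x) coordinates. *)
Definition move u (x : move_kind) : ivec N :=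
  match x with
  | inl (inl i) => if 0 < px u i then - e1 i else e1 i
  | inl (inr i) => if 0 < pz u i then - e2 i else e2 i
  | inr (inl f) => bridge (fbits f) (fun j => 0 < pz u j)
  | inr (inr f) => - bridge (fun j => 0 < px u j) (fbits f)
  end.

Lemma graver_move u x : graver A (move u x).
Proof.
by case: x => [[i|i]|[f|f]] /=; try case: ifP => _;
  do ?apply: graver_opp; apply: graver_e1 || apply: graver_e2 || apply: graver_bridge.
Qed.

Lemma ps_move u x :
  ps (move u x) = match x with inl _ => 0 | inr (inl _) => 1 | inr (inr _) => -1 end.
Proof. by case: x => [[i|i]|[f|f]] /=; try case: ifP => _; rewrite ?vatN blocksE ?oppr0. Qed.

Lemma px_move u x j : (j < k)%N -> px (move u x) j =
  match x with
  | inl (inl i) => (if 0 < px u i then -1 else 1) * kdelta i j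
  | inl (inr _) => 0
  | inr (inl f) => (fbits f j)%:R
  | inr (inr f) => - (0 < px u j)%R%:R
  end.
Proof.
move=> jk; case: x => [[i|i]|[f|f]] /=; try case: ifP => _;
  by rewrite ?vatN blocksE // ?mulN1r ?mul1r ?oppr0.
Qed.

Lemma pz_move u x j : (j < k)%N -> pz (move u x) j =
  match x with
  | inl (inl _) => 0
  | inl (inr i) => (if 0 < pz u i then -1 else 1) * kdelta i j
  | inr (inl f) => - (0 < pz u j)%R%:R
  | inr (inr f) => (fbits f j)%:R
  end.
Proof.
move=> jk; case: x => [[i|i]|[f|f]] /=; try case: ifP => _;
  by rewrite ?vatN blocksE // ?mulN1r ?mul1r ?oppr0 ?opprK.
Qed.

Lemma move_inj u : injective (move u).
Proof.
move=> x y E; have := congr1 (fun g => ps g) E; rewrite !ps_move.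
have Ex j (jk : (j < k)%N) := congr1 (fun g => px g j) E.
have Ez j (jk : (j < k)%N) := congr1 (fun g => pz g j) E.
case: x {E} Ex Ez => [[i|i]|[f|f]]; case: y => [[i'|i']|[f'|f']] Ex Ez //= _.
- have := Ex i (ltn_ord i); rewrite !px_move // /kdelta eqxx.
  case: (eqVneq (i : nat) i') => [/val_inj -> //|_]; by rewrite mulr0; case: ifP.
- by have := Ex i (ltn_ord i); rewrite !px_move // /kdelta eqxx; case: ifP.
- by have := Ex i' (ltn_ord i'); rewrite !px_move // /kdelta eqxx; case: ifP.
- have := Ez i (ltn_ord i); rewrite !pz_move // /kdelta eqxx.
  case: (eqVneq (i : nat) i') => [/val_inj -> //|_]; by rewrite mulr0; case: ifP.
- congr (inr (inl _)); apply/ffunP => o; have := Ex o (ltn_ord o).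
  by rewrite !px_move // !fbits_ord; case: (f o); case: (f' o).
- congr (inr (inr _)); apply/ffunP => o; have := Ez o (ltn_ord o).
  by rewrite !pz_move // !fbits_ord; case: (f o); case: (f' o).
Qed.

Definition supp1 (S : int) := [set i : 'I_k | w1 i 0 + S != 0].
Definition supp2 (S : int) := [set i : 'I_k | w2 i 0 + (c - S) != 0].
Definition all_bits := enum [set: {ffun 'I_k -> bool}].

Definition moves u : seq move_kind :=
  map inl (map inl (enum (supp1 (ps u))) ++ map inr (enum (supp2 (ps u)))) ++
  map inr (map inl (if ps u < c - n2 then all_bits else [::]) ++
           map inr (if n1 < ps u then all_bits else [::])).

Lemma mem_moves u x : x \in moves u ->
  match x with
  | inl (inl i) => w1 i 0 + ps u != 0
  | inl (inr i) => w2 i 0 + (c - ps u) != 0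
  | inr (inl _) => ps u < c - n2
  | inr (inr _) => n1 < ps u
  end.
Proof.
rewrite mem_cat => /orP[] /mapP[y + ->]; rewrite mem_cat => /orP[] /mapP[z + ->].
- by rewrite mem_enum inE.
- by rewrite mem_enum inE.
- by case: ifP.
- by case: ifP.
Qed.

(* A bridge move is admissible as soon as r > n2, since then every z_j + t_j = w2_j + r is positive. *)
Lemma move_ge0 u x : in_fiber A b u -> x \in moves u -> forall j, 0 <= (u + move u x) j 0.
Proof.
move=> Fu /mem_moves xu; have [u0 E1 E2 E3] := in_fiberE Fu.
have [Mx Mz Ms] := (mul_A0 _).1 (graver_move u x).1.
have n1j j := @negnorm_ge _ w1 j; have n2j j := @negnorm_ge _ w2 j.
have n10 := negnorm_ge0 w1; have n20 := negnorm_ge0 w2.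
apply: blocks_ge0 => [j jk|j jk|j jk|j jk||]; rewrite vatD;
  try (move: (Mx j jk) (Mz j jk) (px_move u x jk) (pz_move u x jk) (E1 j jk) (E2 j jk)
             (u0 j) (u0 (k + j)%N) (u0 (2 * k + j)%N) (u0 (3 * k + j)%N) (n1j j jk) (n2j j jk));
  move: Ms (ps_move u x) (u0 (4 * k)%N) (u0 (4 * k).+1) E3;
  case: x xu {Mx Mz} => [[i|i]|[f|f]] /= xu.
all: try (move: (E1 i (ltn_ord i)) (E2 i (ltn_ord i)) (u0 i) (u0 (k + i)%N) (u0 (2 * k + i)%N)
           (u0 (3 * k + i)%N); rewrite !vat_ord in xu *; rewrite /kdelta;
          case: ifP => ?; case: eqVneq => [->|]).
all: try (case: (fbits f j); case: (boolP (0 < px u j)) => ?; case: (boolP (0 < pz u j)) => ?).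
all: lia.
Qed.

Definition nbrs u := [seq u + move u x | x <- moves u].

(* The least degree of a fiber vertex with s-coordinate S. *)
Definition deg_at (S : int) : nat :=
  (#|supp1 S| + #|supp2 S| + (if (S < c - n2)%R then 2 ^ k else 0)
   + (if (n1 < S)%R then 2 ^ k else 0))%N.

Lemma uniq_nbrs u : uniq (nbrs u).
Proof.
rewrite map_inj_uniq => [|x y /addrI]; last exact: move_inj.
by do 2 apply: uniq_inl_inr; rewrite ?enum_uniq //; case: ifP; rewrite ?enum_uniq.
Qed.

Lemma size_nbrs u : size (nbrs u) = deg_at (ps u).
Proof.
rewrite /nbrs /deg_at size_map !size_cat !size_map !size_cat !size_map -!cardE.
have size_all_bits : size all_bits = (2 ^ k)%N.
  by rewrite -cardE cardsT card_ffun card_bool card_ord.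
by case: ifP; case: ifP; rewrite ?size_all_bits /= ?addn0 ?addnA.
Qed.

Lemma nbrs_adjacent u v : in_fiber A b u -> v \in nbrs u -> adjacent A b (graver A) u v.
Proof.
move=> Fu /mapP[x xu ->]; apply/(adjacentE _ Fu); exists (move u x).
  exact: graver_move.
by split=> //; apply: move_ge0.
Qed.

Lemma deg_at_le u d : in_fiber A b u -> has_degree A b (graver A) u d ->
  (deg_at (ps u) <= d)%N.
Proof.
move=> Fu [s [us [<- sE]]]; rewrite -size_nbrs; apply: uniq_leq_size (uniq_nbrs u) _.
by move=> v /(nbrs_adjacent Fu) /sE.
Qed.

Definition vertex_at (S : int) : ivec N :=
  blocks (fun i => vat w1 i + S) (fun _ => 0) (fun i => vat w2 i + (c - S)) (fun _ => 0)
         S (c - S).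

Lemma vertex_at_fiber S : n1 <= S <= c - n2 -> in_fiber A b (vertex_at S).
Proof.
move=> S_range; have n1j j := @negnorm_ge _ w1 j; have n2j j := @negnorm_ge _ w2 j.
split; last by apply/mul_A_b; split=> [i ik|i ik|]; rewrite ?blocksE //; lia.
apply: blocks_ge0 => [j jk|j jk|j jk|j jk||]; rewrite ?blocksE //;
  try (move: (n1j j jk) (n2j j jk)); move: (negnorm_ge0 w1) (negnorm_ge0 w2); lia.
Qed.

Lemma eq_bridge s t s' t' : (forall j, (j < k)%N -> s j = s' j) ->
  (forall j, (j < k)%N -> t j = t' j) -> bridge s t = bridge s' t'.
Proof.
by move=> ss' tt'; apply: eq_blocks => [j jk|j jk|j jk|j jk||]; rewrite ?blocksE ?ss' ?tt'.
Qed.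

Lemma vertex_at_nbrs S v : n1 <= S <= c - n2 ->
  adjacent A b (graver A) (vertex_at S) v -> v \in nbrs (vertex_at S).
Proof.
move=> S_range; set u := vertex_at S; have Fu := vertex_at_fiber S_range.
(* As y = t = 0 at u, nonnegativity of u + g forces the direction of every Graver move g. *)
case/(adjacentE _ Fu) => g G [-> /vat_ge0 v0].
have n10 := negnorm_ge0 w1; have n20 := negnorm_ge0 w2.
have nbr x h : x \in moves u -> h = move u x -> u + h \in nbrs u.
  by move=> xu ->; apply: map_f.
move: v0; have [[i ik [->|->]]|[i ik [->|->]]|[s [t [->|->]]]] := graver_cases G => v0.
- by have := v0 (k + i)%N; rewrite vatD !blocksE // /kdelta eqxx; lia.
- have := v0 i; rewrite vatD vatN !blocksE // /kdelta eqxx (vat_ord w1 (Ordinal ik)) => xi.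
  apply: (nbr (inl (inl (Ordinal ik)))).
    by rewrite !mem_cat map_f // mem_cat map_f // mem_enum inE blocksE; lia.
  by rewrite /= blocksE // (vat_ord w1 (Ordinal ik)) ifT //; lia.
- by have := v0 (3 * k + i)%N; rewrite vatD !blocksE // /kdelta eqxx; lia.
- have := v0 (2 * k + i)%N; rewrite vatD vatN !blocksE // /kdelta eqxx (vat_ord w2 (Ordinal ik)) => zi.
  apply: (nbr (inl (inr (Ordinal ik)))).
    by rewrite !mem_cat map_f // mem_cat orbC map_f // mem_enum inE blocksE; lia.
  by rewrite /= blocksE // (vat_ord w2 (Ordinal ik)) ifT //; lia.
- have tT j : (j < k)%N -> t j.
    by move=> jk; have := v0 (3 * k + j)%N; rewrite vatD !blocksE //; case: (t j) => //=; lia.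
  have zj j : (j < k)%N -> 1 <= vat w2 j + (c - S).
    by move=> jk; have := v0 (2 * k + j)%N; rewrite vatD !blocksE // tT //; lia.
  have S_lt : S < c - n2.
    suff : n2 < c - S by lia.
    apply: negnorm_lt => [|j jk]; last by have := zj j jk; lia.
    by have := v0 (4 * k).+1; rewrite vatD !blocksE; lia.
  apply: (nbr (inr (inl [ffun o : 'I_k => s o]))).
    by rewrite mem_cat map_f ?orbT // mem_cat map_f // blocksE S_lt mem_enum inE.
  apply: eq_bridge => j jk; first by rewrite /fbits insubT ffunE.
  by rewrite tT // blocksE //; have := zj j jk; lia.
- have sT j : (j < k)%N -> s j.
    by move=> jk; have := v0 (k + j)%N; rewrite vatD vatN !blocksE //; case: (s j) => //=; lia.
  have xj j : (j < k)%N -> 1 <= vat w1 j + S.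
    by move=> jk; have := v0 j; rewrite vatD vatN !blocksE // sT //; lia.
  have S_gt : n1 < S.
    apply: negnorm_lt => [|j jk]; last by have := xj j jk; lia.
    by have := v0 (4 * k)%N; rewrite vatD vatN !blocksE; lia.
  apply: (nbr (inr (inr [ffun o : 'I_k => t o]))).
    by rewrite mem_cat map_f ?orbT // mem_cat map_f ?orbT // blocksE S_gt mem_enum inE.
  congr (- _); apply: eq_bridge => j jk; last by rewrite /fbits insubT ffunE.
  by rewrite sT // blocksE //; have := xj j jk; lia.
Qed.

Lemma has_degree_vertex_at S : n1 <= S <= c - n2 ->
  has_degree A b (graver A) (vertex_at S) (deg_at S).
Proof.
move=> S_range; exists (nbrs (vertex_at S)); split; first exact: uniq_nbrs.
split; first by rewrite size_nbrs ps_blocks.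
move=> v; split; last exact: vertex_at_nbrs.
by apply: nbrs_adjacent; apply: vertex_at_fiber.
Qed.

Lemma min_degree_deg_at d :
  (exists2 S, n1 <= S <= c - n2 & deg_at S = d) ->
  (forall S, n1 <= S <= c - n2 -> (d <= deg_at S)%N) ->
  min_degree A b (graver A) d.
Proof.
move=> [S S_range <-] d_min; split.
  exists (vertex_at S); split; first exact: vertex_at_fiber.
  exact: has_degree_vertex_at.
move=> u d' Fu /(deg_at_le Fu); apply: leq_trans; apply: d_min.
by have [_ _ _ E3] := in_fiberE Fu; have := fiber_range Fu; lia.
Qed.

Lemma deg_atE S : n1 <= S <= c - n2 -> deg_at S =
  ((if S == n1 then supp_shift w1 else k + 2 ^ k)
   + (if S == (c - n2)%R then supp_shift w2 else k + 2 ^ k))%N.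
Proof.
move=> S_range; rewrite /deg_at /supp1 /supp2 !card_supp_shift; try lia.
have -> : (c - S == n2) = (S == c - n2) by apply/eqP/eqP; lia.
have -> : (S < c - n2) = (S != c - n2) by rewrite lt_neqAle; lia.
have -> : (n1 < S) = (S != n1) by rewrite lt_neqAle eq_sym; lia.
by case: eqP => ?; case: eqP => ? /=; lia.
Qed.

End Fiber.

End Ak.

Theorem proposition3 (k : nat) (hk : (1 <= k)%N) (w1 w2 : 'cV[int]_k) (c : int) :
  (l_b w1 w2 c = u_b w1 w2 c ->
     min_degree (A_mat k) (b_vec w1 w2 c) (graver (A_mat k))
       (supp_shift w1 + supp_shift w2)) /\
  (l_b w1 w2 c < u_b w1 w2 c ->
     min_degree (A_mat k) (b_vec w1 w2 c) (graver (A_mat k))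
       (minn (supp_shift w1) (supp_shift w2) + k + 2 ^ k)).
Proof.
rewrite /l_b /u_b; have s1 := supp_shift_le w1; have s2 := supp_shift_le w2.
split=> lu; apply: min_degree_deg_at.
- exists (negnorm w1); first lia.
  by rewrite deg_atE; [rewrite eqxx -lu eqxx | lia].
- move=> S S_range; have -> : S = negnorm w1 by lia.
  by rewrite deg_atE; [rewrite eqxx -lu eqxx | lia].
- have [s12|s21] := leqP (supp_shift w1) (supp_shift w2).
    exists (negnorm w1); first lia.
    by rewrite deg_atE ?eqxx; [case: eqP => ?; lia | lia].
  exists (c - negnorm w2); first lia.
  by rewrite deg_atE ?eqxx; [case: eqP => ?; lia | lia].
move=> S S_range; rewrite deg_atE //.
by case: eqP => ?; case: eqP => ?; lia.
Qed.
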